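(* Let $N\ge1$, $\varphi,\gamma\in(0,1)$ with $\varphi+\gamma\ge1$, $\alpha=\min\{\varphi,\gamma\}$. Suppose the one-step transition probabilities of $(X_t)$ on $\{0,1\}^N$ have the form $$p_{t-1\to t}(\boldsymbol{x},\boldsymbol{y})=\varphi^{\|\boldsymbol{y}\|}\bar\varphi^{N-\|\boldsymbol{y}\|}\Big\{1+\sum_{A\subseteq[N],A\neq\emptyset}\kappa_{t,A}\prod_{k\in A}\Big(1-\frac{\boldsymbol{y}[k]}{\varphi}\Big)\Big(1-\frac{\boldsymbol{x}[k]}{\gamma}\Big)\Big\},\quad \kappa_{t,A}=\Big(\frac{\alpha}{\bar\alpha}\Big)^{|A|}\mathbb{E}\Big[\prod_{k\in A}\Big(1-\frac{Z_t[k]}{\alpha}\Big)\Big],$$ for a random element $Z_t$ of $\{0,1\}^N$ with exchangeable coordinates. Then $\kappa_{t,A}=\tilde\kappa_{t,|A|}$ with $$\tilde\kappa_{t,k}=\Big(\frac{\alpha}{\bar\alpha}\Big)^{k}\mathbb{E}\big[Q_k(\|Z_t\|;N,\alpha)\big],$$ and $$p_{t-1\to t}(\boldsymbol{x},\boldsymbol{y})=\varphi^{\|\boldsymbol{y}\|}\bar\varphi^{N-\|\boldsymbol{y}\|}\Big\{1+\sum_{k=1}^N\binom{N}{k}\tilde\kappa_{t,k}R_k\big(\|\boldsymbol{x}\|,\|\boldsymbol{y}\|,\langle\boldsymbol{x},\boldsymbol{y}\rangle\big)\Big\},$$ where $R_k$ is the coefficient of $\binom{N}{k}s^k$ in $$G_R(\boldsymbol{x},\boldsymbol{y};s)=(1+s)^{N_{00}}\big(1-(\bar\gamma/\gamma)s\big)^{N_{10}}\big(1-(\bar\varphi/\varphi)s\big)^{N_{01}}\big(1+(\bar\varphi\bar\gamma/(\varphi\gamma))s\big)^{N_{11}},$$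 with $N_{ab}=|\{k:\boldsymbol{x}[k]=a,\boldsymbol{y}[k]=b\}|$, so that $N_{00}=N-\|\boldsymbol{x}\|-\|\boldsymbol{y}\|+\langle\boldsymbol{x},\boldsymbol{y}\rangle$, $N_{01}=\|\boldsymbol{y}\|-\langle\boldsymbol{x},\boldsymbol{y}\rangle$, $N_{10}=\|\boldsymbol{x}\|-\langle\boldsymbol{x},\boldsymbol{y}\rangle$, $N_{11}=\langle\boldsymbol{x},\boldsymbol{y}\rangle$.
   Context: $\bar a=1-a$; $[N]=\{1,\dots,N\}$; $\|\boldsymbol{x}\|$ is the number of ones of $\boldsymbol{x}\in\{0,1\}^N$ and $\langle\boldsymbol{x},\boldsymbol{y}\rangle=\sum_k\boldsymbol{x}[k]\boldsymbol{y}[k]$. The Krawtchouk polynomials $Q_n(\zeta;N,a)$, $n=0,\dots,N$, $a\in(0,1)$, are defined by the generating function $\sum_{n=0}^N\binom{N}{n}Q_n(\zeta;N,a)s^n=(1-(\bar a/a)s)^\zeta(1+s)^{N-\zeta}$; they are orthogonal for the Binomial$(N,a)$ distribution with $Q_n(0;N,a)=1$. *)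

From HB Require Import structures.
From mathcomp Require Import all_boot all_order all_algebra all_fingroup.
Set Implicit Arguments. Unset Strict Implicit. Unset Printing Implicit Defensive.
Import Order.TTheory GRing.Theory Num.Theory.
Local Open Scope ring_scope.

Definition bvec (N : nat) := {ffun 'I_N -> bool}.

Definition wt (N : nat) (x : bvec N) : nat := (\sum_(k < N) (x k : nat))%N.
Definition ip (N : nat) (x y : bvec N) : nat := (\sum_(k < N) (x k && y k : nat))%N.

(* Krawtchouk polynomial Q_n(zeta; N, a), defined by its generating function:
   sum_n C(N,n) Q_n s^n = (1 - (abar/a) s)^zeta (1+s)^(N - zeta). *)
Definition krawtchouk (R : fieldType) (n zeta N : nat) (a : R) : R :=
  (((1 - ((1 - a) / a)%:P * 'X) ^+ zeta * ('X + 1) ^+ (N - zeta)) `_ n)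
    / ('C(N, n))%:R.

Definition Rcoef (R : fieldType) (N : nat) (phi gamma : R) (k nx ny nxy : nat) : R :=
  let N00 := ((N + nxy) - (nx + ny))%N in
  let N10 := (nx - nxy)%N in
  let N01 := (ny - nxy)%N in
  let N11 := nxy in
  ((('X + 1) ^+ N00
    * (1 - ((1 - gamma) / gamma)%:P * 'X) ^+ N10
    * (1 - ((1 - phi) / phi)%:P * 'X) ^+ N01
    * (1 + (((1 - phi) * (1 - gamma)) / (phi * gamma))%:P * 'X) ^+ N11) `_ k)
    / ('C(N, k))%:R.

Definition is_pmf (R : numDomainType) (N : nat) (P : bvec N -> R) : Prop :=
  (forall z, 0 <= P z) /\ \sum_(z : bvec N) P z = 1.

Definition exchangeable (R : Type) (N : nat) (P : bvec N -> R) : Prop :=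
  forall (s : 'S_N) (z : bvec N), P [ffun k => z (s k)] = P z.

Definition expect (R : pzRingType) (N : nat) (P : bvec N -> R) (f : bvec N -> R) : R :=
  \sum_(z : bvec N) P z * f z.

Definition kappa (R : fieldType) (N : nat) (P : bvec N -> R) (alpha : R)
  (A : {set 'I_N}) : R :=
  (alpha / (1 - alpha)) ^+ #|A|
  * expect P (fun z => \prod_(k in A) (1 - (z k)%:R / alpha)).

Definition kappa_tilde (R : fieldType) (N : nat) (P : bvec N -> R) (alpha : R)
  (k : nat) : R :=
  (alpha / (1 - alpha)) ^+ k * expect P (fun z => krawtchouk k (wt z) N alpha).

From HB Require Import structures.
From mathcomp Require Import all_boot all_order all_algebra all_fingroup.
From mathcomp Require Import ring.
Import Order.TTheory GRing.Theory Num.Theory.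
Set Implicit Arguments. Unset Strict Implicit.
Local Open Scope ring_scope.

(* Both formulas come from the expansion of a product of linear factors: the
   coefficient of s^n in prod_k (1 + w_k s) is the sum over n-subsets A of
   prod_(k in A) w_k.  For w_k = 1 - Z[k]/alpha the left side is the Krawtchouk
   generating function, so C(N,n) Q_n(||Z||) is the sum of the centred products
   over n-subsets; by exchangeability all these products have the same
   expectation (two subsets of equal size differ by a permutation), hence
   kappa_A depends on |A| only.  For w_k = (1 - y[k]/phi)(1 - x[k]/gamma), which
   depends only on the pattern (x[k], y[k]), the product is G_R, and grouping the
   sum over A by |A| gives the second formula. *)

Lemma prod_bvec_pairs (T : comPzSemiRingType) (N : nat) (x y : bvec N)
    (f : bool -> bool -> T) :
  \prod_(k < N) f (x k) (y k) =
  f false false ^+ ((N + ip x y) - (wt x + wt y)) * f true false ^+ (wt x - ip x y)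
  * f false true ^+ (wt y - ip x y) * f true true ^+ ip x y.
Proof.
pose cnt a b := (\sum_(k < N) ((x k == a) && (y k == b) : nat))%N.
transitivity (f false false ^+ cnt false false * f true false ^+ cnt true false
    * f false true ^+ cnt false true * f true true ^+ cnt true true).
  rewrite /cnt -!prodrXr -!big_split /=; apply: eq_bigr => k _.
  by case: (x k); case: (y k); rewrite /= ?expr0 ?expr1 ?mulr1 ?mul1r.
have cnt_tt : cnt true true = ip x y.
  by apply: eq_bigr => k _; case: (x k); case: (y k).
have cnt_x : (cnt true false + ip x y)%N = wt x.
  by rewrite /cnt /ip /wt -big_split; apply: eq_bigr => k _; case: (x k); case: (y k).
have cnt_y : (cnt false true + ip x y)%N = wt y.
  by rewrite /cnt /ip /wt -big_split; apply: eq_bigr => k _; case: (x k); case: (y k).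
have cnt_ff : (cnt false false + wt x + wt y)%N = (N + ip x y)%N.
  rewrite /cnt /ip /wt -!big_split /=.
  rewrite -[X in (_ = X + _)%N]card_ord -sum1_card -big_split /=.
  by apply: eq_bigr => k _; case: (x k); case: (y k).
by rewrite cnt_tt -cnt_ff -cnt_x -cnt_y -addnA !addnK.
Qed.

Lemma coef_prod_linear (R : comNzRingType) (I : finType) (w : I -> R) (n : nat) :
  (\prod_(i : I) ((w i)%:P * 'X + 1))`_n
  = \sum_(A : {set I} | #|A| == n) \prod_(i in A) w i.
Proof.
rewrite bigA_distr coef_sum [RHS]big_mkcond /=; apply: eq_bigr => A _.
rewrite -big_mkcond /= big_split /= -rmorph_prod prodr_const coefCM coefXn.
by rewrite eq_sym; case: eqP; rewrite ?mulr1 ?mulr0.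
Qed.

Lemma exists_perm_imset (T : finType) (A B : {set T}) :
  #|A| = #|B| -> exists s : {perm T}, s @: A = B.
Proof.
move: {2}#|A :\: B| (leqnn #|A :\: B|) => n; elim: n A => [|n IH] A.
  rewrite leqn0 cards_eq0 setD_eq0 => sAB cAB; exists 1%g.
  by rewrite imset_perm1; apply/eqP; rewrite eqEcard sAB cAB /=.
move=> leAB cAB; have [sAB|/subsetPn[i iA iNB]] := boolP (A \subset B).
  by exists 1%g; rewrite imset_perm1; apply/eqP; rewrite eqEcard sAB cAB /=.
have [sBA|/subsetPn[j jB jNA]] := boolP (B \subset A).
  have eBA : B = A by apply/eqP; rewrite eqEcard sBA cAB /=.
  by rewrite eBA iA in iNB.
pose t := tperm i j.
have mem_tA x : (x \in t @: A) = (t x \in A) by rewrite -preim_permV tpermV inE.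
have tA_B : t @: A :\: B \proper A :\: B.
  apply/properP; split; last first.
    by exists i; rewrite !inE ?mem_tA ?tpermL ?iA ?iNB ?(negbTE jNA).
  apply/subsetP => x; rewrite !inE mem_tA => /andP[xNB].
  case: tpermP => [->|xj|_ _ ->]; first by rewrite (negbTE jNA).
    by rewrite xj jB in xNB.
  by rewrite xNB.
have [s tsA] : exists s : {perm T}, s @: (t @: A) = B.
  apply: IH; last by rewrite card_imset //; apply: perm_inj.
  by rewrite -ltnS (leq_trans (proper_card tA_B)).
by exists (t * s)%g; rewrite -tsA -imset_comp; apply: eq_imset => x; rewrite permM.
Qed.

Definition permute_bvec (N : nat) (s : 'S_N) (z : bvec N) : bvec N :=
  [ffun k => z (s k)].

Lemma permute_bvec_inj (N : nat) (s : 'S_N) : injective (permute_bvec s).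
Proof.
move=> z1 z2 /ffunP e; apply/ffunP => k.
by have := e (s^-1 k)%g; rewrite !ffunE permKV.
Qed.

Lemma expect_permute (R : pzRingType) (N : nat) (P : bvec N -> R)
    (f : bvec N -> R) (s : 'S_N) :
  exchangeable P -> expect P (f \o permute_bvec s) = expect P f.
Proof.
move=> exP; rewrite /expect [RHS](reindex_inj (@permute_bvec_inj N s)) /=.
by apply: eq_bigr => z _; rewrite exP.
Qed.

Definition centered_prod (R : fieldType) (N : nat) (a : R) (A : {set 'I_N})
    (z : bvec N) : R :=
  \prod_(k in A) (1 - (z k)%:R / a).

Lemma centered_prod_imset (R : fieldType) (N : nat) (a : R) (s : 'S_N)
    (A : {set 'I_N}) (z : bvec N) :
  centered_prod a (s @: A) z = centered_prod a A (permute_bvec s z).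
Proof.
rewrite /centered_prod big_imset /=; last by move=> i j _ _; apply: perm_inj.
by apply: eq_bigr => k _; rewrite ffunE.
Qed.

Lemma expect_centered_prod_card (R : fieldType) (N : nat) (P : bvec N -> R)
    (a : R) (A B : {set 'I_N}) :
  exchangeable P -> #|A| = #|B| ->
  expect P (centered_prod a A) = expect P (centered_prod a B).
Proof.
move=> exP /exists_perm_imset[s <-].
rewrite -(expect_permute (centered_prod a A) s exP).
by apply: eq_bigr => z _; rewrite centered_prod_imset.
Qed.

Lemma krawtchouk_subset_sum (R : fieldType) (N n : nat) (a : R) (z : bvec N) :
  a != 0 ->
  krawtchouk n (wt z) N a
  = (\sum_(A : {set 'I_N} | #|A| == n) centered_prod a A z) / ('C(N, n))%:R.
Proof.
move=> a_neq0; rewrite /krawtchouk -coef_prod_linear.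
(* [prod_bvec_pairs] is used with [x = y = z], so [f] ignores its second argument. *)
pose f (b _ : bool) : {poly R} := if b then 1 - ((1 - a) / a)%:P * 'X else 'X + 1.
have wt_ip : ip z z = wt z by apply: eq_bigr => k _; rewrite andbb.
have -> : \prod_(k < N) ((1 - (z k)%:R / a)%:P * 'X + 1)
          = \prod_(k < N) f (z k) (z k).
  apply: eq_bigr => k _; rewrite /f; case: (z k) => /=; last first.
    by rewrite mulr0n mul0r subr0 polyC1 mul1r.
  have -> : 1 - 1%:R / a = - ((1 - a) / a) by field.
  by rewrite polyCN mulNr addrC.
rewrite prod_bvec_pairs wt_ip subnDr subnn !expr0 !mulr1.
by congr (_`_n / _); rewrite /f mulrC.
Qed.

Lemma Rcoef_subset_sum (R : fieldType) (N k : nat) (phi gamma : R) (x y : bvec N) :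
  phi != 0 -> gamma != 0 ->
  Rcoef N phi gamma k (wt x) (wt y) (ip x y)
  = (\sum_(A : {set 'I_N} | #|A| == k)
       \prod_(i in A) ((1 - (y i)%:R / phi) * (1 - (x i)%:R / gamma)))
    / ('C(N, k))%:R.
Proof.
move=> phi_neq0 gamma_neq0; rewrite -coef_prod_linear.
pose f (b c : bool) : {poly R} :=
  if b then if c then 1 + (((1 - phi) * (1 - gamma)) / (phi * gamma))%:P * 'X
            else 1 - ((1 - gamma) / gamma)%:P * 'X
  else if c then 1 - ((1 - phi) / phi)%:P * 'X else 'X + 1.
rewrite /Rcoef -[in LHS]/(f false false) -[in LHS]/(f true false).
rewrite -[in LHS]/(f false true) -[in LHS]/(f true true) -prod_bvec_pairs.
congr (nth _ (polyseq _) _ / _); apply: eq_bigr => i _; rewrite /f.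
case: (x i); case: (y i); rewrite /= ?mulr0n ?mulr1n ?mul0r ?subr0 ?mulr1 ?mul1r //.
- have -> : (1 - phi^-1) * (1 - gamma^-1) = (1 - phi) * (1 - gamma) / (phi * gamma).
    by field; rewrite phi_neq0 gamma_neq0.
  by rewrite addrC.
- have -> : 1 - gamma^-1 = - ((1 - gamma) / gamma) by field.
  by rewrite polyCN mulNr addrC.
- have -> : 1 - phi^-1 = - ((1 - phi) / phi) by field.
  by rewrite polyCN mulNr addrC.
Qed.

Lemma kappa_eq_kappa_tilde (R : numFieldType) (N : nat) (P : bvec N -> R) (a : R)
    (A : {set 'I_N}) :
  a != 0 -> exchangeable P -> kappa P a A = kappa_tilde P a #|A|.
Proof.
move=> a_neq0 exP; rewrite /kappa /kappa_tilde; congr (_ * _).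
have binom_neq0 : ('C(N, #|A|))%:R != 0 :> R.
  by rewrite pnatr_eq0 -lt0n bin_gt0 -[X in (_ <= X)%N]card_ord max_card.
have same_law (B : {set 'I_N}) : #|B| == #|A| ->
    \sum_z P z * centered_prod a B z = expect P (centered_prod a A).
  by move/eqP; apply: expect_centered_prod_card.
rewrite /expect; under [RHS]eq_bigr => z _ do
  rewrite krawtchouk_subset_sum // mulrA mulr_sumr.
rewrite -mulr_suml exchange_big /= (eq_bigr _ same_law) sumr_const.
rewrite (eq_card (B := [set B : {set 'I_N} | #|B| == #|A|])); last by move=> B; rewrite inE.
by rewrite card_draws card_ord -[X in X / _]mulr_natr mulfK.
Qed.

Lemma sum_nonempty_subsets_by_card (V : nmodType) (T : finType) (F : {set T} -> V) :
  \sum_(A : {set T} | A != set0) F A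
  = \sum_(1 <= k < #|T|.+1) \sum_(A : {set T} | #|A| == k) F A.
Proof.
rewrite (exchange_big_dep xpredT) //= [LHS]big_mkcond /=; apply: eq_bigr => A _.
have -> : A != set0 = (#|A| \in index_iota 1 #|T|.+1).
  by rewrite mem_index_iota ltnS max_card andbT card_gt0.
rewrite big_const_seq (eq_count (a2 := pred1 #|A|)); last by move=> k; rewrite /= eq_sym.
by rewrite count_uniq_mem ?iota_uniq //; case: ifP; rewrite /= ?addr0.
Qed.

Theorem proposition7 (R : realFieldType) (N : nat) (phi gamma : R)
  (P : bvec N -> R) (p : bvec N -> bvec N -> R) :
  (1 <= N)%N ->
  0 < phi < 1 -> 0 < gamma < 1 -> 1 <= phi + gamma ->
  is_pmf P -> exchangeable P ->
  let alpha := Num.min phi gamma in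
  (forall x y : bvec N,
     p x y = phi ^+ wt y * (1 - phi) ^+ (N - wt y)
       * (1 + \sum_(A : {set 'I_N} | A != set0)
                kappa P alpha A
                * \prod_(k in A) ((1 - (y k)%:R / phi) * (1 - (x k)%:R / gamma)))) ->
  (forall A : {set 'I_N}, A != set0 -> kappa P alpha A = kappa_tilde P alpha #|A|)
  /\
  (forall x y : bvec N,
     p x y = phi ^+ wt y * (1 - phi) ^+ (N - wt y)
       * (1 + \sum_(1 <= k < N.+1)
                ('C(N, k))%:R * kappa_tilde P alpha k
                * Rcoef N phi gamma k (wt x) (wt y) (ip x y))).
Proof.
move=> _ /andP[phi_gt0 _] /andP[gamma_gt0 _] _ _ exP alpha p_def.
have alpha_neq0 : alpha != 0 by rewrite gt_eqF // lt_min phi_gt0 gamma_gt0.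
have kappaE (A : {set 'I_N}) : kappa P alpha A = kappa_tilde P alpha #|A|.
  exact: kappa_eq_kappa_tilde.
split=> [A _ | x y]; first exact: kappaE.
rewrite p_def sum_nonempty_subsets_by_card card_ord; congr (_ * (1 + _)).
apply: eq_big_nat => k /andP[_ k_le_N].
have binom_neq0 : ('C(N, k))%:R != 0 :> R by rewrite pnatr_eq0 -lt0n bin_gt0 -ltnS.
rewrite Rcoef_subset_sum ?gt_eqF // [RHS]mulrC [RHS]mulrA divfK // mulr_suml.
by apply: eq_bigr => A /eqP cardA; rewrite kappaE cardA mulrC.
Qed.
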